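(* Let $n\ge1$ and let $T\in\mathcal{L}(\mathcal{H})$ be $n$-EP. Then $T$ has finite ascent and finite descent, and moreover $\mathrm{asc}(T)\le n$ and $\mathrm{dsc}(T)\le n$.
   Context: $\mathcal{H}$ is a Hilbert space, $\mathcal{L}(\mathcal{H})$ the bounded operators on it; $N(\cdot)$ and $R(\cdot)$ denote kernel and range. The ascent is $\mathrm{asc}(T)=\min\{k\in\mathbb{N}: N(T^k)=N(T^{k+1})\}$ and the descent is $\mathrm{dsc}(T)=\min\{k\in\mathbb{N}: R(T^k)=R(T^{k+1})\}$ (each is $\infty$ if no such $k$ exists). For $T$ with closed range, $T^\dagger$ is its Moore–Penrose inverse (unique solution of $TT^\dagger T=T$, $T^\dagger TT^\dagger=T^\dagger$, $(T^\dagger T)^*=T^\dagger T$, $(TT^\dagger)^*=TT^\dagger$). $T$ is $n$-EP if it has closed range and $T^nT^\dagger=T^\dagger T^n$. *)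

From HB Require Import structures.
From mathcomp Require Import all_boot all_order all_algebra.
From mathcomp Require Import all_classical all_reals.
From mathcomp Require Import topology normedtype.
From mathcomp Require Import complex.
Set Implicit Arguments. Unset Strict Implicit. Unset Printing Implicit Defensive.
Import Order.TTheory GRing.Theory Num.Theory.
Import numFieldNormedType.Exports.
Local Open Scope classical_set_scope.
Local Open Scope ring_scope.
Local Open Scope complex_scope.

Record hilbert_inner (R : realType) (V : completeNormedModType R[i]) := HilbertInner {
  inner : V -> V -> R[i];
  inner_linear : forall (a : R[i]) (x z y : V),
      inner (a *: x + z) y = a * inner x y + inner z y;
  inner_conj : forall x y : V, inner y x = (inner x y)^*;
  inner_norm : forall x : V, inner x x = `|x| ^+ 2
}.

Section Ops.
Context (R : realType) (V : completeNormedModType R[i]) (H : hilbert_inner V).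

Definition bounded_op (T : V -> V) : Prop := linear T /\ continuous T.

Definition kernel (T : V -> V) : set V := [set x | T x = 0].
Definition rng (T : V -> V) : set V := range T.

Definition closed_range (T : V -> V) : Prop := closed (range T).

Definition self_adjoint (A : V -> V) : Prop :=
  forall x y, inner H (A x) y = inner H x (A y).

Definition MP_inverse (T S : V -> V) : Prop :=
  bounded_op S /\
  (forall x, T (S (T x)) = T x) /\
  (forall x, S (T (S x)) = S x) /\
  self_adjoint (S \o T) /\
  self_adjoint (T \o S).

Definition n_EP (n : nat) (T : V -> V) : Prop :=
  closed_range T /\
  exists S, MP_inverse T S /\ (forall x, iter n T (S x) = S (iter n T x)).

Definition is_ascent (T : V -> V) (p : nat) : Prop :=
  kernel (iter p T) = kernel (iter p.+1 T) /\
  (forall k, (k < p)%N -> kernel (iter k T) <> kernel (iter k.+1 T)).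

Definition is_descent (T : V -> V) (p : nat) : Prop :=
  rng (iter p T) = rng (iter p.+1 T) /\
  (forall k, (k < p)%N -> rng (iter k T) <> rng (iter k.+1 T)).

End Ops.

From HB Require Import structures.
From mathcomp Require Import all_boot all_order all_algebra.
From mathcomp Require Import all_classical all_reals.
From mathcomp Require Import topology normedtype.
From mathcomp Require Import complex.
Set Implicit Arguments. Unset Strict Implicit. Unset Printing Implicit Defensive.
Import Order.TTheory GRing.Theory Num.Theory.
Import numFieldNormedType.Exports.
Local Open Scope ring_scope.

(* Let S = T^+ and n >= 1.  From T S T = T one gets T^n = T^n S T and
   T^n = T S T^n; moving S across T^n turns these into
   N(T^(n+1)) <= N(T^n) and R(T^n) <= R(T^(n+1)), so the kernels and ranges
   of the powers of T are stationary from n on. *)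

Lemma ex_least_le (P : nat -> Prop) (n : nat) : P n ->
  exists p, [/\ P p, forall k, (k < p)%N -> ~ P k & (p <= n)%N].
Proof.
move=> Pn; have exP : exists m, `[< P m >] by exists n; apply/asboolP.
case: (ex_minnP exP) => p /asboolP Pp minp.
exists p; split=> // [k ltkp Pk|]; last exact/minp/asboolP.
by have := minp k (asboolT Pk); rewrite leqNgt ltkp.
Qed.

Lemma linear_fun0 (K : pzRingType) (U W : lmodType K) (f : U -> W) :
  linear f -> f 0 = 0.
Proof. by move=> lf; have := lf (-1) 0 0; rewrite scaler0 addr0 scaleN1r addNr. Qed.

Section PowerStabilization.
Variables (R : realType) (V : completeNormedModType R[i]) (T : V -> V).

Lemma is_ascent_le (m : nat) : kernel (iter m T) = kernel (iter m.+1 T) ->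
  exists p, is_ascent T p /\ (p <= m)%N.
Proof.
by move=> /(@ex_least_le (fun k => kernel (iter k T) = _))[p [? ? ?]]; exists p.
Qed.

Lemma is_descent_le (m : nat) : rng (iter m T) = rng (iter m.+1 T) ->
  exists q, is_descent T q /\ (q <= m)%N.
Proof.
by move=> /(@ex_least_le (fun k => rng (iter k T) = _))[q [? ? ?]]; exists q.
Qed.

Variables (S : V -> V) (n : nat).
Hypothesis TST : forall x, T (S (T x)) = T x.
Hypothesis iter_commS : forall x, iter n.+1 T (S x) = S (iter n.+1 T x).

Lemma kernel_iter_stable : T 0 = 0 -> S 0 = 0 ->
  kernel (iter n.+1 T) = kernel (iter n.+2 T).
Proof.
move=> T0 S0; apply/seteqP; split=> x; rewrite /kernel/mkset => Tx0.
  by rewrite iterS Tx0 T0.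
have TnSTx : iter n.+1 T (S (T x)) = iter n.+1 T x by rewrite iterSr TST -iterSr.
by rewrite -TnSTx iter_commS -iterSr Tx0.
Qed.

Lemma rng_iter_stable : rng (iter n.+1 T) = rng (iter n.+2 T).
Proof.
apply/seteqP; split=> _ [x _ <-]; last by exists (T x); rewrite // -iterSr.
by exists (S x) => //; rewrite iterS iter_commS iterS TST.
Qed.

End PowerStabilization.

Theorem mainTheorem19 (R : realType) (V : completeNormedModType R[i])
    (H : hilbert_inner V) (n : nat) (T : V -> V) :
  (1 <= n)%N -> bounded_op T -> n_EP H n T ->
  (exists p, is_ascent T p /\ (p <= n)%N) /\
  (exists q, is_descent T q /\ (q <= n)%N).
Proof.
move=> n_gt0 [linT _] [_ [S [[[linS _] [TST _]] iter_commS]]].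
case: n n_gt0 iter_commS => // n _ iter_commS.
split; [apply: is_ascent_le | apply: is_descent_le].
  by apply: kernel_iter_stable TST iter_commS _ _; apply: linear_fun0.
exact: rng_iter_stable TST iter_commS.
Qed.
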